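(* Let $q$ be a prime power and let $\mathrm{Aff}_q=\mathbb F_q\rtimes\mathbb F_q^*$ act on $\mathbb F_q$ by $(b,a)\circ x=ax+b$. For $c\in\mathbb F_q$ let $H_c=\{((1-a)c,a): a\in\mathbb F_q^*\}$ (the stabilizer of $c$), and let $\mathcal H=\{H_c: c\in\mathbb F_q\}$. Then the (quantum) query complexity of $\mathrm{HSSP}(\mathrm{Aff}_q,\mathbb F_q,\circ,\mathcal H)$ is $\Omega(q^{1/2})$.
   Context: Group actions: a left action $\circ$ of a finite group $G$ on a finite set $M$ is assumed faithful. For $H\le G$, $H\circ m=\{h\circ m:h\in H\}$ is the $H$-orbit of $m$; $H^*$ denotes the partition of $M$ into $H$-orbits. For a partition $\pi=\{\pi_1,\dots,\pi_\ell\}$ of $M$, $\pi^*=\{g\in G:\ g\circ\pi_i=\pi_i\ \forall i\}$. A subgroup $H$ is closed if $H=H^{**}$. The hidden symmetry subgroup problem $\mathrm{HSSP}(G,M,\circ,\mathcal H)$, for a family $\mathcal H$ of closed subgroups of $G$: given oracle access to a function $f:M\to S$ ($S$ a finite set) such that for some $H\in\mathcal H$ we have $f(x)=f(y)\iff H\circ x=H\circ y$ (we say $f$ hides $H$ by symmetries), output $H$. Query complexity counts the number of oracle queries. *)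

(* Quantum query model over an arbitrary numClosedFieldType C
   (the complex numbers being the intended instance). *)
From HB Require Import structures.
From mathcomp Require Import all_boot all_order all_algebra all_field.
Set Implicit Arguments. Unset Strict Implicit. Unset Printing Implicit Defensive.
Import Order.TTheory GRing.Theory Num.Theory.
Local Open Scope ring_scope.

Definition Aff (F : finFieldType) : {set F * F} := [set p : F * F | p.2 != 0].

Definition aff_act (F : finFieldType) (p : F * F) (x : F) : F := p.2 * x + p.1.

Definition orbit_of (F : finFieldType) (H : {set F * F}) (x : F) : {set F} :=
  [set aff_act p x | p in H].

Definition Hc (F : finFieldType) (c : F) : {set F * F} :=
  [set ((1 - a) * c, a) | a in [set a : F | a != 0]].

Definition hides (F : finFieldType) (S : eqType) (f : F -> S) (H : {set F * F}) : Prop :=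
  forall x y : F, (f x == f y) = (orbit_of H x == orbit_of H y).

(* Basis of the state space: (query input x : F, answer register y : 'I_m,
   workspace z : 'I_w).  Vectors are functions B -> C, operators B -> B -> C. *)
Definition basisT (F : finFieldType) (m w : nat) : finType :=
  (F * 'I_m * 'I_w)%type.

Definition apply_op (C : numClosedFieldType) (B : finType)
    (U : B -> B -> C) (v : B -> C) : B -> C :=
  fun b => \sum_(b' : B) U b b' * v b'.

Definition unitary (C : numClosedFieldType) (B : finType) (U : B -> B -> C) : Prop :=
  forall b1 b2 : B, \sum_(b : B) (U b b1)^* * U b b2 = (b1 == b2)%:R.

Definition ket (C : numClosedFieldType) (B : finType) (b0 : B) : B -> C :=
  fun b => (b == b0)%:R.

(* Standard oracle |x, y, z> |-> |x, y + f(x) mod m, z>, with S = 'I_n.+2. *)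
Definition oracle (C : numClosedFieldType) (F : finFieldType) (n w : nat)
    (f : F -> 'I_n.+2) : basisT F n.+2 w -> basisT F n.+2 w -> C :=
  fun b b' => ((b.1.1 == b'.1.1) && (b.1.2 == b'.1.2 + f b'.1.1) && (b.2 == b'.2))%:R.

(* State after the unitaries U 0, O_f, U 1, O_f, ..., O_f, U k (k queries). *)
Fixpoint run (C : numClosedFieldType) (B : finType) (U : nat -> B -> B -> C)
    (O : B -> B -> C) (b0 : B) (k : nat) : B -> C :=
  match k with
  | 0 => apply_op (U 0%N) (ket C b0)
  | k'.+1 => apply_op (U k) (apply_op O (run U O b0 k'))
  end.

Definition success_prob (C : numClosedFieldType) (F : finFieldType) (n w T : nat)
    (U : nat -> basisT F n.+2 w -> basisT F n.+2 w -> C)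
    (b0 : basisT F n.+2 w) (out : basisT F n.+2 w -> {set F * F})
    (f : F -> 'I_n.+2) (H : {set F * F}) : C :=
  \sum_(b : basisT F n.+2 w | out b == H) `|run U (oracle C f) b0 T b| ^+ 2.

(* The proof is the hybrid argument of Bennett-Bernstein-Brassard-Vazirani.
   For c in F_q let f_c mark the point c (f_c c = max, f_c x = 0 otherwise);
   f_c hides H_c, because the H_c-orbits are {c} and F_q \ {c}.  Compare the
   run psi_c of an algorithm on the oracle of f_c with its run phi on the
   oracle of the constant function 0.
   - Generic facts on squared norms: unitaries preserve them, they satisfy a
     weighted triangle inequality, and disjoint restrictions sum to at most
     the total.
   - The hybrid bound: ||psi_c(T) - phi(T)||^2 <= 2T sum_{t<T} p_c(t), where
     the perturbation p_c(t) caused by switching the (t+1)-th query to the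
     oracle of f_c is at most 4 times the weight phi(t) puts on queries to c;
     hence
     the sum over c of these distances is at most 8 T^2.
   - Orbit computations: f_c hides H_c and c |-> H_c is injective.
   - Succeeding for every c with probability 2/3 forces each psi_c(T) to put
     weight on the output H_c, while phi(T) can only split its unit weight
     among the q distinct outputs; this gives 2q <= 48 T^2 + 6. *)
From HB Require Import structures.
From mathcomp Require Import all_boot all_order all_algebra all_field.
From mathcomp Require Import ring zify.
Import Order.TTheory GRing.Theory Num.Theory.
Local Open Scope ring_scope.
Set Implicit Arguments. Unset Strict Implicit. Unset Printing Implicit Defensive.

(* A weighted triangle inequality for squared moduli, which replaces the
   triangle inequality for norms in the hybrid argument (no square roots). *)
Lemma weighted_triangle (C : numClosedFieldType) (s : nat) (a b : C) :
  s%:R * `|a + b| ^+ 2 <= s.+1%:R * `|a| ^+ 2 + (s * s.+1)%:R * `|b| ^+ 2.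
Proof.
have defect : s%:R * `|a + b| ^+ 2 + `|a - s%:R * b| ^+ 2 =
              s.+1%:R * `|a| ^+ 2 + (s * s.+1)%:R * `|b| ^+ 2.
  rewrite !normCK rmorphD rmorphB rmorphM /= rmorph_nat natrM -(addn1 s) natrD.
  ring.
by rewrite -defect lerDl exprn_ge0.
Qed.

Section SquaredNorm.
Variables (C : numClosedFieldType) (B : finType).
Implicit Types (P : pred B) (v : B -> C).

Definition sqnorm P v : C := \sum_(b | P b) `|v b| ^+ 2.

Lemma sqnorm_ge0 P v : 0 <= sqnorm P v.
Proof. by apply: sumr_ge0 => b _; rewrite exprn_ge0. Qed.

Lemma eq_sqnorm P v1 v2 : v1 =1 v2 -> sqnorm P v1 = sqnorm P v2.
Proof. by move=> E; apply: eq_bigr => b _; rewrite E. Qed.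

Lemma sqnorm_le_total P v : sqnorm P v <= sqnorm predT v.
Proof.
by rewrite /sqnorm [X in _ <= X](bigID P) /= lerDl; apply: sqnorm_ge0.
Qed.

Lemma sqnorm_weighted_triangle s P v1 v2 :
  s%:R * sqnorm P (fun b => v1 b + v2 b) <=
  s.+1%:R * sqnorm P v1 + (s * s.+1)%:R * sqnorm P v2.
Proof.
rewrite /sqnorm !mulr_sumr -big_split /=.
by apply: ler_sum => b _; apply: weighted_triangle.
Qed.

Lemma sqnorm_disjoint (I : finType) (Q : I -> pred B) v :
  (forall b i j, Q i b -> Q j b -> i = j) ->
  \sum_i sqnorm (Q i) v <= sqnorm predT v.
Proof.
move=> disjQ; rewrite /sqnorm (exchange_big_dep predT) //=.
apply: ler_sum => b _; case: (pickP (Q^~ b)) => [i Qib | noQ]; last first.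
  by rewrite big_pred0 ?exprn_ge0.
rewrite (bigD1 i) //= big1 ?addr0 // => j /andP [Qjb /eqP neq_ji].
by case: neq_ji; apply: disjQ Qjb Qib.
Qed.

Lemma sum_kronecker (G : B -> C) b1 : \sum_b2 G b2 * (b2 == b1)%:R = G b1.
Proof.
rewrite (bigD1 b1) //= eqxx mulr1 big1 ?addr0 // => b /negPf ->.
exact: mulr0.
Qed.

Lemma apply_opB U v1 v2 b :
  apply_op U v1 b - apply_op U v2 b = apply_op U (fun x => v1 x - v2 x) b.
Proof. by rewrite /apply_op -sumrB; apply: eq_bigr => x _; rewrite mulrBr. Qed.

Lemma sqnorm_unitary U v : unitary U -> sqnorm predT (apply_op U v) = sqnorm predT v.
Proof.
move=> unitU; rewrite /sqnorm /apply_op.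
transitivity (\sum_b \sum_b1 \sum_b2 (U b b1 * v b1) * (U b b2 * v b2)^*).
  apply: eq_bigr => b _; rewrite normCK rmorph_sum mulr_suml.
  by apply: eq_bigr => b1 _; rewrite mulr_sumr.
rewrite exchange_big /=; apply: eq_bigr => b1 _; rewrite exchange_big /=.
transitivity (\sum_b2 (v b1 * (v b2)^*) * (b2 == b1)%:R).
  apply: eq_bigr => b2 _; rewrite -unitU mulr_sumr; apply: eq_bigr => b _.
  by rewrite rmorphM /=; ring.
by rewrite sum_kronecker normCK.
Qed.

End SquaredNorm.

Section Oracle.
Variables (C : numClosedFieldType) (F : finFieldType) (n w : nat).
Local Notation B := (basisT F n.+2 w).

(* The oracle of f permutes the basis: it moves |x, y, z> to |x, y + f x, z>,
   so the new amplitude at b is the old one at shift f b. *)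
Definition shift (f : F -> 'I_n.+2) (b : B) : B := (b.1.1, b.1.2 - f b.1.1, b.2).

Lemma shift_inj f : injective (shift f).
Proof.
apply: (can_inj (g := fun b : B => (b.1.1, b.1.2 + f b.1.1, b.2))).
by case=> [[x y] z]; rewrite /shift /= subrK.
Qed.

Lemma oracle_apply f (v : B -> C) b : apply_op (oracle C f) v b = v (shift f b).
Proof.
rewrite /apply_op -sum_kronecker; apply: eq_bigr => b' _; rewrite mulrC.
congr (_ * _%:R); case: b => [[x y] z]; case: b' => [[x' y'] z'].
rewrite /shift /= !xpair_eqE /= [x' == x]eq_sym [z' == z]eq_sym.
by case: (eqVneq x x') => [<-|] //=; rewrite [y' == _]eq_sym subr_eq.
Qed.

Lemma sqnorm_shift P f (v : B -> C) : (forall b, P (shift f b) = P b) ->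
  sqnorm P (fun b => v (shift f b)) = sqnorm P v.
Proof.
move=> shiftP; rewrite /sqnorm [RHS](reindex_inj (@shift_inj f)) /=.
by apply: eq_bigl => b; rewrite shiftP.
Qed.

Definition zero_fun : F -> 'I_n.+2 := fun _ => 0.
Definition marker (c : F) : F -> 'I_n.+2 := fun x => if x == c then ord_max else 0.

Lemma shift_zero b : shift zero_fun b = b.
Proof. by case: b => [[x y] z]; rewrite /shift /zero_fun /= subr0. Qed.

Lemma shift_marker_off c b : b.1.1 != c -> shift (marker c) b = b.
Proof. by case: b => [[x y] z] /= /negPf xc; rewrite /shift /marker /= xc subr0. Qed.

End Oracle.

Arguments zero_fun {F n}.
Arguments marker {F n}.

Section Hybrid.
Variables (C : numClosedFieldType) (F : finFieldType) (n w : nat).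
Local Notation B := (basisT F n.+2 w).
Variable U : nat -> B -> B -> C.
Hypothesis unitaryU : forall i, unitary (U i).
Variable b0 : B.

Definition phi t := run U (oracle C zero_fun) b0 t.
Definition psi c t := run U (oracle C (marker c)) b0 t.

Lemma sqnorm_phi t : sqnorm predT (phi t) = 1.
Proof.
elim: t => [|t IH]; rewrite /phi /= sqnorm_unitary //.
  rewrite /sqnorm (bigD1 b0) //= /ket eqxx normr1 expr1n big1 ?addr0 //.
  by move=> b /negPf ->; rewrite normr0 expr0n.
rewrite (eq_sqnorm _ (oracle_apply zero_fun (phi t))).
by rewrite (eq_sqnorm _ (fun b => congr1 (phi t) (shift_zero b))).
Qed.

Definition dist c t := sqnorm predT (fun b => psi c t b - phi t b).

(* Perturbation caused by the (t+1)-th query when the oracle marks c. *)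
Definition perturb c t := sqnorm predT (fun b => phi t (shift (marker c) b) - phi t b).

(* One query step: psi_c(t+1) - phi(t+1) is, up to a unitary, the shifted
   difference at time t plus the perturbation at time t. *)
Lemma dist_step c t :
  t.+1%:R * dist c t.+1 <= t.+2%:R * dist c t + (t.+1 * t.+2)%:R * perturb c t.
Proof.
have -> : dist c t.+1 =
    sqnorm predT (fun b => (psi c t (shift (marker c) b) - phi t (shift (marker c) b))
                           + (phi t (shift (marker c) b) - phi t b)).
  rewrite /dist (eq_sqnorm _ (fun b => apply_opB _ _ _ b)) sqnorm_unitary //.
  by apply: eq_sqnorm => b; rewrite !oracle_apply shift_zero addrA subrK.
apply: le_trans (sqnorm_weighted_triangle _ _ _ _) _.
by rewrite (sqnorm_shift (fun b => psi c t b - phi t b)).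
Qed.

Lemma dist_bound c t : dist c t <= (2 * t)%:R * \sum_(i < t) perturb c i.
Proof.
elim: t => [|t IH].
  rewrite /dist /sqnorm big1 ?big_ord0 ?mulr0 // => b _.
  by rewrite /psi /phi /= subrr normr0 expr0n.
have perturb_ge0 i : 0 <= perturb c i by apply: sqnorm_ge0.
rewrite -(ler_pM2l (ltr0Sn C t)); apply: le_trans (dist_step c t) _.
rewrite big_ord_recr /= mulrA -natrM mulrDr; apply: lerD.
  apply: le_trans (ler_wpM2l (ler0n _ _) IH) _.
  rewrite mulrA -natrM ler_wpM2r ?sumr_ge0 // ler_nat; nia.
by rewrite ler_wpM2r // ler_nat; nia.
Qed.

(* The query to c only moves amplitude of basis vectors querying c. *)
Lemma perturb_le c t : perturb c t <= 4%:R * sqnorm (fun b : B => b.1.1 == c) (phi t).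
Proof.
have -> : perturb c t =
    sqnorm (fun b : B => b.1.1 == c) (fun b => phi t (shift (marker c) b) + - phi t b).
  rewrite /perturb /sqnorm (bigID (fun b : B => b.1.1 == c)) /= [X in _ + X]big1 ?addr0 //.
  by move=> b /shift_marker_off ->; rewrite subrr normr0 expr0n.
have := sqnorm_weighted_triangle 1 (fun b : B => b.1.1 == c)
          (fun b => phi t (shift (marker c) b)) (fun b => - phi t b).
rewrite mul1r => /le_trans; apply.
rewrite (sqnorm_shift (phi t)) => [|[[x y] z]] //.
have -> : sqnorm (fun b : B => b.1.1 == c) (fun b => - phi t b) =
          sqnorm (fun b : B => b.1.1 == c) (phi t).
  by apply: eq_bigr => b _; rewrite normrN.
by rewrite -mulrDl -natrD.
Qed.

(* Queries to distinct points are disjoint events, so the total perturbation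
   of one query over all markers is bounded. *)
Lemma sum_perturb t : \sum_c perturb c t <= 4%:R.
Proof.
apply: le_trans (ler_sum _ (fun c _ => perturb_le c t)) _.
rewrite -mulr_sumr -[X in _ <= X]mulr1 ler_wpM2l // -(sqnorm_phi t).
by apply: sqnorm_disjoint => b i j /eqP <- /eqP.
Qed.

Lemma sum_dist T : \sum_c dist c T <= (8 * T * T)%:R.
Proof.
apply: le_trans (ler_sum _ (fun c _ => dist_bound c T)) _.
rewrite -mulr_sumr exchange_big /=.
have perturb_total : \sum_(i < T) \sum_c perturb c i <= \sum_(i < T) 4%:R.
  by apply: ler_sum => i _; apply: sum_perturb.
apply: le_trans (ler_wpM2l (ler0n _ _) perturb_total) _.
by rewrite sumr_const card_ord -mulrnA -natrM ler_nat; nia.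
Qed.

End Hybrid.

Section Stabilizers.
Variable F : finFieldType.

Lemma orbit_Hc (c x : F) :
  orbit_of (Hc c) x = if x == c then [set c] else [set~ c].
Proof.
apply/setP => y; case: (eqVneq x c) => [->|xc]; rewrite !inE.
  apply/imsetP/eqP => [[p /imsetP [a _ ->] ->]|->]; first by rewrite /aff_act /=; ring.
  exists ((1 - 1) * c, 1); last by rewrite /aff_act /=; ring.
  by apply/imsetP; exists 1; rewrite // inE oner_neq0.
have xc0 : x - c != 0 by rewrite subr_eq0.
apply/imsetP/idP => [[p /imsetP [a]]|yc].
  rewrite inE => a0 -> ->; rewrite /aff_act /=.
  have -> : a * x + (1 - a) * c = a * (x - c) + c by ring.
  by rewrite -subr_eq0 addrK mulf_neq0.
set a := (y - c) / (x - c).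
have a0 : a != 0 by rewrite mulf_neq0 ?invr_neq0 // subr_eq0.
exists ((1 - a) * c, a); first by apply/imsetP; exists a; rewrite // inE.
rewrite /aff_act /=.
have -> : a * x + (1 - a) * c = a * (x - c) + c by ring.
by rewrite divfK // subrK.
Qed.

(* The marker of c separates exactly the two H_c-orbits. *)
Lemma marker_hides n (c : F) : hides (@marker F n c) (Hc c).
Proof.
have set1_neq_setC1 : [set c] != [set~ c].
  by apply/eqP => /setP /(_ c); rewrite !inE eqxx.
have max_neq0 : (ord_max : 'I_n.+2) != 0 by [].
move=> x y; rewrite /marker !orbit_Hc.
case: (x == c); case: (y == c); rewrite ?eqxx //.
  by rewrite (negPf max_neq0) (negPf set1_neq_setC1).
by rewrite eq_sym (negPf max_neq0) eq_sym (negPf set1_neq_setC1).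
Qed.

(* Once F has an element outside {0, 1}, distinct points have distinct stabilizers. *)
Lemma Hc_inj : (2 < #|F|)%N -> injective (@Hc F).
Proof.
move=> F3 c c' eqH.
have /subsetPn [a _] : ~~ ([set: F] \subset [set 0; 1]).
  apply: contraTN F3 => /subset_leq_card; rewrite cardsT -leqNgt => /leq_trans; apply.
  by rewrite cards2; case: (_ != _).
rewrite !inE negb_or => /andP [a0 a1].
have : ((1 - a) * c, a) \in Hc c' by rewrite -eqH; apply/imsetP; exists a; rewrite ?inE.
case/imsetP => a' _ [E1 E2]; rewrite -E2 in E1.
by apply: mulfI E1; rewrite subr_eq0 eq_sym.
Qed.

End Stabilizers.

Section LowerBound.
Variables (C : numClosedFieldType) (F : finFieldType) (n w : nat).
Local Notation B := (basisT F n.+2 w).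
Variable U : nat -> B -> B -> C.
Hypothesis unitaryU : forall i, unitary (U i).
Variables (b0 : B) (out : B -> {set F * F}).

Local Notation answers H := (fun b : B => out b == H).

(* The outputs H_c are pairwise distinct, so the run on the zero oracle
   can only share its unit weight among them. *)
Lemma sum_answer_weight T : (2 < #|F|)%N ->
  \sum_c sqnorm (answers (Hc c)) (phi U b0 T) <= 1.
Proof.
move=> F3; rewrite -(sqnorm_phi unitaryU b0 T).
by apply: sqnorm_disjoint => b i j /eqP -> /eqP /(Hc_inj F3).
Qed.

(* Success on the oracle marking c needs the runs to differ or phi to answer H_c. *)
Lemma success_split c T :
  success_prob T U b0 out (marker c) (Hc c) <=
  2%:R * dist U b0 c T + 2%:R * sqnorm (answers (Hc c)) (phi U b0 T).
Proof.
have -> : success_prob T U b0 out (marker c) (Hc c) =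
    sqnorm (answers (Hc c)) (fun b => (psi U b0 c T b - phi U b0 T b) + phi U b0 T b).
  by apply: eq_bigr => b _; rewrite subrK.
have := sqnorm_weighted_triangle 1 (answers (Hc c))
          (fun b => psi U b0 c T b - phi U b0 T b) (phi U b0 T).
rewrite mul1r => /le_trans; apply.
by rewrite lerD2r ler_wpM2l ?ler0n // sqnorm_le_total.
Qed.

Lemma query_budget T : (2 < #|F|)%N ->
  (forall c, 2%:R / 3%:R <= success_prob T U b0 out (marker c) (Hc c)) ->
  (2 * #|F| <= 48 * T * T + 6)%N.
Proof.
move=> F3 succ.
have per_point c : (2%:R : C) <=
    3%:R * (2%:R * dist U b0 c T + 2%:R * sqnorm (answers (Hc c)) (phi U b0 T)).
  rewrite -ler_pdivrMl ?ltr0n // mulrC; apply: le_trans (succ c) (success_split c T).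
have summed : \sum_(c : F) (2%:R : C) <= \sum_(c : F)
    3%:R * (2%:R * dist U b0 c T + 2%:R * sqnorm (answers (Hc c)) (phi U b0 T)).
  by apply: ler_sum => c _; apply: per_point.
rewrite sumr_const -mulr_sumr big_split /= -!mulr_sumr in summed.
have := le_trans summed (ler_wpM2l (ler0n C 3) (lerD
  (ler_wpM2l (ler0n C 2) (sum_dist unitaryU b0 T))
  (ler_wpM2l (ler0n C 2) (sum_answer_weight T F3)))).
set k := (8 * T * T)%N => budget.
suff : ((2 * #|F|)%:R : C) <= (3 * (2 * k + 2))%:R by rewrite ler_nat /k; lia.
by rewrite mulr1 in budget; rewrite !natrM mulr_natr natrD natrM.
Qed.
End LowerBound.

(* q >= 4 forces T >= 1, and then 2q <= 48 T^2 + 6 gives q <= 27 T^2. *)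
Theorem proposition1 :
  exists k q0 : nat,
  forall (C : numClosedFieldType) (F : finFieldType) (n w T : nat)
         (U : nat -> basisT F n.+2 w -> basisT F n.+2 w -> C)
         (b0 : basisT F n.+2 w) (out : basisT F n.+2 w -> {set F * F}),
    (q0 <= #|F|)%N ->
    (forall i : nat, unitary (U i)) ->
    (forall (c : F) (f : F -> 'I_n.+2), hides f (Hc c) ->
        2%:R / 3%:R <= success_prob T U b0 out f (Hc c)) ->
    (#|F| <= k * T ^ 2)%N.
Proof.
exists 27%N, 4%N => C F n w T U b0 out F4 unitaryU succ.
have F3 : (2 < #|F|)%N by apply: leq_trans F4.
move: (query_budget unitaryU F3 (fun c => succ c _ (marker_hides n c))); clear succ.
rewrite -mulnA mulnn; case: (posnP T) => [-> | T_gt0]; first by lia.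
have : (0 < T ^ 2)%N by rewrite expn_gt0 T_gt0.
by move: (T ^ 2)%N => s; lia.
Qed.
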